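(* Let $\Omega\subset\mathbb{R}^n$ be a bounded domain that is star-shaped with respect to a point $x^*\in\Omega$, let $g\in C(\Omega)$, and let $u=SS^+(g)$ be the upper star-shaped envelope of $g$ with respect to $x^*$. Then $u$ is the viscosity solution of the obstacle problem \[ \min\{u(x)-g(x),\ (x-x^* )\cdot\nabla u(x)\}=0 \quad\text{in }\Omega, \] together with $u(x^* )=g(x^* )$.
   Context: A set $S$ is star-shaped with respect to $x^*$ if $x\in S$ implies $tx^*+(1-t)x\in S$ for all $t\in[0,1]$; a function $v:\Omega\to\mathbb{R}$ is star-shaped with respect to $x^*$ if all its sublevel sets $\{v\le\alpha\}$ are. $SS^+(g)(x)=\inf\{v(x)\mid v:\Omega\to\mathbb{R}\text{ star-shaped w.r.t. } x^*,\ v\ge g\}$. For $F(x,r,p)$, an upper (lower) semicontinuous $u$ is a viscosity subsolution (supersolution) of $F[u]=0$ in $\Omega$ if for every $\phi\in C^1(\Omega)$, whenever $u-\phi$ has a local maximum (minimum) at $x\in\Omega$, $F(x,u(x),\nabla\phi(x))\le 0$ ($\ge 0$); a viscosity solution is both. Here $F(x,r,p)=\min\{r-g(x),(x-x^* )\cdot p\}$. *)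

From HB Require Import structures.
From mathcomp Require Import all_boot all_order all_algebra.
From mathcomp Require Import all_classical all_reals all_analysis.
Set Implicit Arguments. Unset Strict Implicit. Unset Printing Implicit Defensive.
Import Order.TTheory GRing.Theory Num.Theory.
Import numFieldNormedType.Exports.
Local Open Scope classical_set_scope.
Local Open Scope ring_scope.

Section Defs.
Variables (R : realType) (n : nat).
Notation V := 'rV[R]_n.

Definition dotp (a b : V) : R := \sum_(i < n) a ord0 i * b ord0 i.

Definition grad (phi : V -> R) (x : V) : V :=
  \row_(i < n) ('D_(delta_mx 0 i) phi x).

Definition star_shaped_set (xs : V) (S : set V) : Prop :=
  forall x, S x -> forall t : R, 0 <= t <= 1 -> S (t *: xs + (1 - t) *: x).

Definition star_shaped_fun (Omega : set V) (xs : V) (v : V -> R) : Prop :=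
  forall alpha : R, star_shaped_set xs [set x | Omega x /\ v x <= alpha].

Definition SSplus (Omega : set V) (xs : V) (g : V -> R) (x : V) : R :=
  inf [set v x | v in [set v : V -> R | star_shaped_fun Omega xs v /\
                                       (forall y, Omega y -> g y <= v y)]].

Definition C1_on (Omega : set V) (phi : V -> R) : Prop :=
  (forall x, Omega x -> differentiable phi x) /\
  {within Omega, continuous (grad phi)}.

Definition usc_on (Omega : set V) (u : V -> R) : Prop :=
  forall x, Omega x -> forall e : R, 0 < e ->
    \forall y \near x, Omega y -> u y < u x + e.

Definition lsc_on (Omega : set V) (u : V -> R) : Prop :=
  forall x, Omega x -> forall e : R, 0 < e ->
    \forall y \near x, Omega y -> u x - e < u y.

Definition local_max_at (Omega : set V) (w : V -> R) (x : V) : Prop :=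
  \forall y \near x, Omega y -> w y <= w x.

Definition local_min_at (Omega : set V) (w : V -> R) (x : V) : Prop :=
  \forall y \near x, Omega y -> w x <= w y.

Definition Fobs (g : V -> R) (xs : V) (x : V) (r : R) (p : V) : R :=
  Num.min (r - g x) (dotp (x - xs) p).

Definition visc_subsol (Omega : set V) (F : V -> R -> V -> R) (u : V -> R) :=
  usc_on Omega u /\
  forall phi : V -> R, C1_on Omega phi -> forall x, Omega x ->
    local_max_at Omega (fun y => u y - phi y) x -> F x (u x) (grad phi x) <= 0.

Definition visc_supersol (Omega : set V) (F : V -> R -> V -> R) (u : V -> R) :=
  lsc_on Omega u /\
  forall phi : V -> R, C1_on Omega phi -> forall x, Omega x ->
    local_min_at Omega (fun y => u y - phi y) x -> 0 <= F x (u x) (grad phi x).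

Definition visc_sol (Omega : set V) (F : V -> R -> V -> R) (u : V -> R) :=
  visc_subsol Omega F u /\ visc_supersol Omega F u.

End Defs.

From HB Require Import structures.
From mathcomp Require Import all_boot all_order all_algebra.
From mathcomp Require Import all_classical all_reals all_analysis.
From mathcomp Require Import ring lra.
Set Implicit Arguments. Unset Strict Implicit. Unset Printing Implicit Defensive.
Import Order.TTheory GRing.Theory Num.Theory.
Import numFieldNormedType.Exports.
Local Open Scope classical_set_scope.
Local Open Scope ring_scope.

(* On Omega, SS^+(g)(x) is the maximum of g on the segment from x to x*: any
   admissible v satisfies v(x) >= v(x_c) >= g(x_c) at a maximiser x_c, and the
   segment maximum is itself admissible.  Hence u = SS^+(g) lies above g, is
   continuous (a maximum over the compact parameter set [0,1] of a jointly
   continuous function), and does not increase when x moves toward x*; where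
   u > g the maximiser is not x itself, so u does not decrease either on a short
   stretch toward x*.  Comparing a test function with u along the ray through x
   gives the sign of the derivative of phi in the direction x - x*. *)

Section Toward.
Variables (K : comPzRingType) (V : lmodType K) (c : V).

Definition toward (x : V) (t : K) : V := t *: c + (1 - t) *: x.

Lemma toward0 x : toward x 0 = x.
Proof. by rewrite /toward scale0r add0r subr0 scale1r. Qed.

Lemma toward_center t : toward c t = c.
Proof. by rewrite /toward -scalerDl addrC subrK scale1r. Qed.

Lemma toward_comp x s t : toward (toward x s) t = toward x (t + s - t * s).
Proof.
rewrite /toward scalerDr !scalerA addrA -scalerDl.
by congr (_ *: _ + _ *: _); ring.
Qed.

Lemma scale_sub_center_addr x h : h *: (x - c) + x = toward x (- h).
Proof.
rewrite /toward opprK scalerBr scalerDl scale1r scaleNr.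
by rewrite addrC addrA [- _ + _]addrC.
Qed.

End Toward.

Section TowardContinuity.
Variables (K : numFieldType) (V : normedModType K) (c : V).

Lemma toward_continuous : continuous (fun z : K * V => toward c z.2 z.1).
Proof.
move=> z; apply: cvgD.
  by apply: cvgZ; [exact: cvg_fst | exact: cvg_cst].
apply: cvgZ; last exact: cvg_snd.
by apply: cvgB; [exact: cvg_cst | exact: cvg_fst].
Qed.

Lemma toward_continuous_param x : continuous (toward c x).
Proof.
move=> t; apply: (@continuous_comp _ _ _ (pair^~ x)
  (fun z : K * V => toward c z.2 z.1)); last exact: toward_continuous.
apply: (@cvg_pair _ _ _ (nbhs t) (nbhs t) (nbhs x)).
  exact: cvg_id.
exact: cvg_cst.
Qed.

Lemma toward_continuous_point t : continuous (toward c ^~ t).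
Proof.
move=> x; apply: (@continuous_comp _ _ _ (pair t)
  (fun z : K * V => toward c z.2 z.1)); last exact: toward_continuous.
apply: (@cvg_pair _ _ _ (nbhs x) (nbhs t) (nbhs x)).
  exact: cvg_cst.
exact: cvg_id.
Qed.

End TowardContinuity.

Section LeftDerivative.
Variables (R : realType) (V : normedModType R).

Lemma near_left_line (x v : V) (P : V -> Prop) :
  (\forall y \near x, P y) -> \forall h \near 0^'-, P (h *: v + x).
Proof.
move=> Px; apply: (cvg_at_left_filter _ Px).
have : {for 0, continuous (fun h : R => h *: v + x)}.
  apply: (@continuousD _ _ _ (fun h : R => h *: v) (fun=> x)); last first.
    exact: cvg_cst.
  by apply: (@continuousZ _ _ _ id (fun=> v)); [exact: cvg_id | exact: cvg_cst].
by rewrite /prop_for /continuous_at scale0r add0r.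
Qed.

Lemma derive_le0_left (f : V -> R) x v : derivable f x v ->
  (\forall h \near 0^'-, f x <= f (h *: v + x)) -> 'D_v f x <= 0.
Proof.
move=> df fx; rewrite /derive cvg_at_leftE //; apply: limr_le.
  exact: cvgP (cvg_dnbhs_at_left df).
near=> h; apply: mulr_le0_ge0.
  by rewrite invr_le0 ltW //; near: h; exact: nbhs_left_lt.
by rewrite subr_ge0; near: h.
Unshelve. all: by end_near.
Qed.

Lemma derive_ge0_left (f : V -> R) x v : derivable f x v ->
  (\forall h \near 0^'-, f (h *: v + x) <= f x) -> 0 <= 'D_v f x.
Proof.
move=> df fx; rewrite -oppr_le0 -deriveN //; apply: derive_le0_left.
  exact: derivableN.
by apply: filterS fx => h; rewrite /= lerN2.
Qed.

Lemma near_left_opp_lt (c : R) : 0 < c -> \forall h \near 0^'-, 0 < - h < c.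
Proof.
move=> c0; near=> h; rewrite oppr_gt0 ltrNl; apply/andP; split; near: h.
  exact: nbhs_left_lt.
by apply: nbhs_left_gt; rewrite oppr_lt0.
Unshelve. all: by end_near.
Qed.

End LeftDerivative.

Section SupAttained.
Variable R : realType.

Lemma sup_max (S : set R) (m : R) : S m -> ubound S m -> sup S = m.
Proof.
move=> Sm ubm; apply/eqP; rewrite eq_le ge_sup /=; last 2 first.
- by exists m.
- exact: ubm.
by apply: ub_le_sup => //; exists m.
Qed.

Lemma inf_min (S : set R) (m : R) : S m -> lbound S m -> inf S = m.
Proof.
move=> Sm lbm; apply/eqP; rewrite eq_le lb_le_inf ?andbT; last 2 first.
- by exists m.
- exact: lbm.
by apply: ge_inf => //; exists m.
Qed.

End SupAttained.

Section Gradient.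
Variables (R : realType) (n : nat).
Notation V := 'rV[R]_n.

Lemma dotp_grad (phi : V -> R) x v : differentiable phi x ->
  dotp v (grad phi x) = 'D_v phi x.
Proof.
move=> dphi; rewrite /dotp (deriveE _ dphi) {2}(row_sum_delta v) linear_sum.
by apply: eq_bigr => i _; rewrite mxE (deriveE _ dphi) linearZ.
Qed.

Lemma local_max_dotp_grad_le0 (Omega : set V) (u phi : V -> R) x v :
  differentiable phi x -> local_max_at Omega (fun y => u y - phi y) x ->
  (\forall h \near 0^'-, Omega (h *: v + x) /\ u x <= u (h *: v + x)) ->
  dotp v (grad phi x) <= 0.
Proof.
move=> dphi umax uray; rewrite dotp_grad //.
apply: derive_le0_left; first exact: diff_derivable.
apply: filterS (filterI uray (near_left_line v umax)) => h [[Oh uh] /(_ Oh)].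
lra.
Qed.

Lemma local_min_dotp_grad_ge0 (Omega : set V) (u phi : V -> R) x v :
  differentiable phi x -> local_min_at Omega (fun y => u y - phi y) x ->
  (\forall h \near 0^'-, Omega (h *: v + x) /\ u (h *: v + x) <= u x) ->
  0 <= dotp v (grad phi x).
Proof.
move=> dphi umin uray; rewrite dotp_grad //.
apply: derive_ge0_left; first exact: diff_derivable.
apply: filterS (filterI uray (near_left_line v umin)) => h [[Oh uh] /(_ Oh)].
lra.
Qed.

End Gradient.

Section StarShapedEnvelope.
Variables (R : realType) (n : nat).
Notation V := 'rV[R]_n.
Variables (Omega : set V) (xs : V) (g : V -> R).
Hypotheses (Omega_star : star_shaped_set xs Omega)
  (g_cont : {in Omega, continuous g}).

Definition seg_max (x : V) : R := sup [set g (toward xs x t) | t in `[0, 1]].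

Lemma g_toward_continuous x t : Omega x -> 0 <= t <= 1 ->
  {for (t, x), continuous (fun z : R * V => g (toward xs z.2 z.1))}.
Proof.
move=> Ox t01.
apply: (@continuous_comp _ _ _ (fun z : R * V => toward xs z.2 z.1)).
  exact: toward_continuous.
by apply: g_cont; rewrite inE; exact: Omega_star.
Qed.

Lemma g_toward_argmax x : Omega x -> exists2 c, 0 <= c <= 1 &
  forall t, 0 <= t <= 1 -> g (toward xs x t) <= g (toward xs x c).
Proof.
move=> Ox.
have gc : {within `[0, 1], continuous (fun t => g (toward xs x t))}.
  apply: continuous_in_subspaceT => t; rewrite inE /= in_itv /= => t01.
  apply: (@continuous_comp _ _ _ (toward xs x)).
    exact: toward_continuous_param.
  by apply: g_cont; rewrite inE; exact: Omega_star.
have [c c01 cmax] := EVT_max ler01 gc.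
by exists c => [|t t01]; [move: c01 | apply: cmax]; rewrite /= in_itv.
Qed.

Lemma seg_max_argmax x c : 0 <= c <= 1 ->
  (forall t, 0 <= t <= 1 -> g (toward xs x t) <= g (toward xs x c)) ->
  seg_max x = g (toward xs x c).
Proof.
move=> c01 cmax; apply: sup_max; first by exists c; rewrite /= ?in_itv.
by move=> _ [t t01 <-]; apply: cmax; move: t01; rewrite /= in_itv.
Qed.

Lemma seg_max_attained x : Omega x ->
  exists2 c, 0 <= c <= 1 & seg_max x = g (toward xs x c).
Proof.
move=> Ox; have [c c01 cmax] := g_toward_argmax Ox.
by exists c; last exact: seg_max_argmax.
Qed.

Lemma le_seg_max x t : Omega x -> 0 <= t <= 1 ->
  g (toward xs x t) <= seg_max x.
Proof.
move=> Ox t01; have [c c01 cmax] := g_toward_argmax Ox.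
by rewrite (seg_max_argmax c01 cmax); exact: cmax.
Qed.

Lemma g_le_seg_max x : Omega x -> g x <= seg_max x.
Proof.
move=> Ox; rewrite -{1}(toward0 xs x).
by apply: le_seg_max; rewrite ?lexx ?ler01.
Qed.

Lemma seg_max_toward_le x s : Omega x -> 0 <= s <= 1 ->
  seg_max (toward xs x s) <= seg_max x.
Proof.
move=> Ox s01; have [c c01 ->] := seg_max_attained (Omega_star Ox s01).
rewrite toward_comp; apply: le_seg_max => //.
by move: c01 s01 => /andP[? ?] /andP[? ?]; apply/andP; split; nra.
Qed.

Lemma seg_max_le_toward x c s : Omega x -> 0 <= c <= 1 ->
  seg_max x = g (toward xs x c) -> 0 <= s < c ->
  seg_max x <= seg_max (toward xs x s).
Proof.
move=> Ox /andP[_ c1] Mx /andP[s0 sc].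
have s1 : 0 < 1 - s by lra.
have r01 : 0 <= (c - s) / (1 - s) <= 1.
  by rewrite divr_ge0 ?ler_pdivrMr //= ?mul1r; lra.
rewrite Mx -[X in g X](_ : toward xs (toward xs x s) ((c - s) / (1 - s)) = _).
  by apply: le_seg_max => //; apply: Omega_star; rewrite // s0 /=; lra.
by rewrite toward_comp; congr toward; field; rewrite lt0r_neq0.
Qed.

Lemma star_shaped_seg_max : star_shaped_fun Omega xs seg_max.
Proof.
move=> alpha x [Ox Mx] t t01; split; first exact: Omega_star.
exact: le_trans (seg_max_toward_le Ox t01) Mx.
Qed.

Lemma SSplus_seg_max x : Omega x -> SSplus Omega xs g x = seg_max x.
Proof.
move=> Ox; apply: inf_min.
  exists seg_max => //.
  by split; [exact: star_shaped_seg_max | exact: g_le_seg_max].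
move=> _ [v [v_star g_le_v] <-]; have [c c01 ->] := seg_max_attained Ox.
apply: le_trans (g_le_v _ (Omega_star Ox c01)) _.
by have [] := v_star (v x) x (conj Ox (lexx _)) c c01.
Qed.

Lemma SSplus_center : Omega xs -> SSplus Omega xs g xs = g xs.
Proof.
move=> Oxs; rewrite SSplus_seg_max //.
by have [c _ ->] := seg_max_attained Oxs; rewrite toward_center.
Qed.

Lemma SSplus_lsc : lsc_on Omega (SSplus Omega xs g).
Proof.
move=> x Ox e e0; have [c c01 Mx] := seg_max_attained Ox.
have gc : {for x, continuous (fun y => g (toward xs y c))}.
  apply: (@continuous_comp _ _ _ (toward xs ^~ c)).
    exact: toward_continuous_point.
  by apply: g_cont; rewrite inE; exact: Omega_star.
have : SSplus Omega xs g x - e < g (toward xs x c).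
  by rewrite SSplus_seg_max // Mx; lra.
move/(cvgr_gt _ gc); apply: filterS => y gy Oy.
by rewrite (SSplus_seg_max Oy); apply: lt_le_trans gy (le_seg_max Oy c01).
Qed.

Lemma SSplus_usc : usc_on Omega (SSplus Omega xs g).
Proof.
move=> x Ox e e0.
have /compact_near_coveringP cover01 := @segment_compact R 0 1.
have near_lt (t : R) : `[0, 1]%classic t ->
    \forall t' \near t & y \near x, g (toward xs y t') < seg_max x + e.
  rewrite /= in_itv /= => t01; apply: (cvgr_lt _ (g_toward_continuous Ox t01)).
  by have := le_seg_max Ox t01; lra.
have := cover01 V (nbhs x) (fun y t => g (toward xs y t) < seg_max x + e)
  (nbhs_filter x) near_lt.
apply: filterS => y gy Oy.
rewrite !SSplus_seg_max //; have [c c01 ->] := seg_max_attained Oy.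
by apply: gy; rewrite /= in_itv.
Qed.

Lemma SSplus_subsol : visc_subsol Omega (Fobs g xs) (SSplus Omega xs g).
Proof.
split; first exact: SSplus_usc.
move=> phi [dphi _] x Ox umax; rewrite /Fobs ge_min.
have [le_ug|lt_gu] := leP (SSplus Omega xs g x) (g x).
  by rewrite subr_le0 le_ug.
apply/orP; right; apply: (local_max_dotp_grad_le0 (dphi x Ox) umax).
have [c c01 Mx] := seg_max_attained Ox.
have c0 : 0 < c.
  rewrite lt0r; case/andP: c01 => -> _; rewrite andbT.
  apply: contraTneq lt_gu => c_eq0.
  by rewrite SSplus_seg_max // Mx c_eq0 toward0 ltxx.
apply: filterS (near_left_opp_lt c0) => h /andP[h0 hc].
have h01 : 0 <= - h <= 1 by case/andP: c01; lra.
rewrite scale_sub_center_addr; split; first exact: Omega_star.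
rewrite !SSplus_seg_max //; last exact: Omega_star.
by apply: seg_max_le_toward Mx _; rewrite // hc ltW.
Qed.

Lemma SSplus_supersol : visc_supersol Omega (Fobs g xs) (SSplus Omega xs g).
Proof.
split; first exact: SSplus_lsc.
move=> phi [dphi _] x Ox umin; rewrite /Fobs le_min.
rewrite subr_ge0 SSplus_seg_max // g_le_seg_max //=.
apply: (local_min_dotp_grad_ge0 (dphi x Ox) umin).
apply: filterS (near_left_opp_lt ltr01) => h /andP[h0 h1].
have h01 : 0 <= - h <= 1 by rewrite !ltW.
rewrite scale_sub_center_addr; split; first exact: Omega_star.
by rewrite !SSplus_seg_max //; [exact: seg_max_toward_le | exact: Omega_star].
Qed.

End StarShapedEnvelope.

Theorem proposition3p12 (R : realType) (n : nat) (Omega : set 'rV[R]_n)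
  (xs : 'rV[R]_n) (g : 'rV[R]_n -> R) :
  open Omega -> connected Omega -> bounded_set Omega ->
  Omega xs -> star_shaped_set xs Omega ->
  {within Omega, continuous g} ->
  visc_sol Omega (Fobs g xs) (SSplus Omega xs g) /\
  SSplus Omega xs g xs = g xs.
Proof.
move=> Omega_open _ _ Oxs Omega_star g_within.
have g_cont : {in Omega, continuous g} by rewrite -continuous_open_subspace.
split; last exact: SSplus_center.
by split; [exact: SSplus_subsol | exact: SSplus_supersol].
Qed.
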